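(* Let $m\ge2$ and let $T\in L(\ell_1^n,\ell_\infty^m)$, $T\neq\theta$, be approximately smooth (i.e. $\varepsilon$-smooth for some $\varepsilon\in[0,2)$). Then $T$ is smooth.
   Context: $\ell_1^n$ is $\mathbb{R}^n$ with the $\ell_1$ norm, $\ell_\infty^m$ is $\mathbb{R}^m$ with the max norm; $L(\ell_1^n,\ell_\infty^m)$ is the space of linear operators with the operator norm, and smoothness refers to $T$ as an element of this space. For a normed space $Z$ and $z\neq\theta$, $J(z)=\{\phi\in S_{Z^*}:\phi(z)=\|z\|\}$; $z$ is smooth if $J(z)$ is a singleton and $\varepsilon$-smooth if $\sup_{\phi,\psi\in J(z)}\|\phi-\psi\|\le\varepsilon$. *)

From HB Require Import structures.
From mathcomp Require Import all_boot all_order all_algebra.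
From mathcomp Require Import classical_sets reals.
Set Implicit Arguments. Unset Strict Implicit. Unset Printing Implicit Defensive.
Import Order.TTheory GRing.Theory Num.Theory.
Local Open Scope ring_scope.
Local Open Scope classical_set_scope.

Section Defs.
Variable R : realType.

Definition norm1 (n : nat) (x : 'cV[R]_n) : R := \sum_(i < n) `|x i 0|.

Definition normInf (m : nat) (y : 'cV[R]_m) : R := \big[Num.max/0]_(i < m) `|y i 0|.

Definition opnorm (m n : nat) (T : 'M[R]_(m, n)) : R :=
  sup [set normInf (T *m x) | x in [set x : 'cV[R]_n | norm1 x <= 1]].

Definition lin_functional (m n : nat) (phi : 'M[R]_(m, n) -> R) : Prop :=
  forall (a : R) (A B : 'M[R]_(m, n)), phi (a *: A + B) = a * phi A + phi B.

Definition dualnorm (m n : nat) (phi : 'M[R]_(m, n) -> R) : R :=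
  sup [set `|phi A| | A in [set A : 'M[R]_(m, n) | opnorm A <= 1]].

Definition Jset (m n : nat) (T : 'M[R]_(m, n)) : set ('M[R]_(m, n) -> R) :=
  [set phi | lin_functional phi /\ dualnorm phi = 1 /\ phi T = opnorm T].

Definition smooth (m n : nat) (T : 'M[R]_(m, n)) : Prop :=
  exists phi, Jset T phi /\ forall psi, Jset T psi -> psi = phi.

Definition eps_smooth (m n : nat) (T : 'M[R]_(m, n)) (eps : R) : Prop :=
  forall phi psi, Jset T phi -> Jset T psi ->
    dualnorm (fun A => phi A - psi A) <= eps.

Definition approx_smooth (m n : nat) (T : 'M[R]_(m, n)) : Prop :=
  exists eps : R, 0 <= eps /\ eps < 2 /\ eps_smooth T eps.

End Defs.

(** The operator norm of [T : l_1^n -> l_oo^m] is the largest modulus of an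
    entry of [T], and the dual of [L(l_1^n, l_oo^m)] is the entrywise [l_1]
    space: [psi A = \sum_p A_p c_p] with [||psi|| = \sum_p |c_p|].  A norming
    functional of [T] must therefore put all its mass on the entries where
    [|T_p| = ||T||], with the sign of [T_p].  If two distinct entries [p], [q]
    attain the norm, the functionals [sg(T_p) e_p] and [sg(T_q) e_q] both lie
    in [J(T)] at distance [2], so [T] is not [eps]-smooth for any [eps < 2];
    if only one entry attains it, [J(T)] is the single functional
    [sg(T_p) e_p]. *)
From mathcomp Require Import all_boot all_order all_algebra.
From mathcomp Require Import boolp classical_sets reals.
Set Implicit Arguments. Unset Strict Implicit. Unset Printing Implicit Defensive.
Import Order.TTheory GRing.Theory Num.Theory.
Local Open Scope ring_scope.
Local Open Scope classical_set_scope.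

Lemma sup_img_le (R : realType) (T : Type) (D : set T) (f : T -> R) (c : R) (x0 : T) :
  D x0 -> (forall x, D x -> f x <= c) -> sup (f @` D) <= c.
Proof.
move=> Dx0 fc; apply: ge_sup; first by exists (f x0), x0.
by move=> _ [x Dx <-]; exact: fc.
Qed.

Lemma le_sup_img (R : realType) (T : Type) (D : set T) (f : T -> R) (c : R) (y : T) :
  (forall x, D x -> f x <= c) -> D y -> f y <= sup (f @` D).
Proof.
move=> fc Dy; apply: ub_le_sup; last by exists y.
by exists c => _ [x Dx <-]; exact: fc.
Qed.

Section MaxEntryNorm.
Variables (R : realType) (m n : nat).
Implicit Types (A : 'M[R]_(m, n)) (p : 'I_m * 'I_n).

Definition maxnorm A : R := \big[Num.max/0]_(p : 'I_m * 'I_n) `|A p.1 p.2|.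

Lemma maxnorm_ge0 A : 0 <= maxnorm A.
Proof. exact: bigmax_ge_id. Qed.

Lemma ler_maxnorm A p : `|A p.1 p.2| <= maxnorm A.
Proof. exact: le_bigmax. Qed.

Lemma maxnorm_le A c : 0 <= c -> (forall i j, `|A i j| <= c) -> maxnorm A <= c.
Proof. by move=> c0 Ac; apply: bigmax_le => // p _; exact: Ac. Qed.

Lemma mx_neq0_entry A : A != 0 -> exists p, A p.1 p.2 != 0.
Proof.
move=> /eqP A0; apply: contrapT => no_entry; apply: A0; apply/matrixP => i j.
by rewrite mxE; apply: contrapT => Aij; apply: no_entry; exists (i, j); apply/eqP.
Qed.

Lemma maxnorm_gt0 A : A != 0 -> 0 < maxnorm A.
Proof.
by case/mx_neq0_entry=> p Ap; apply: lt_le_trans (ler_maxnorm A p); rewrite normr_gt0.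
Qed.

Lemma maxnorm_attained A : A != 0 -> exists p, `|A p.1 p.2| = maxnorm A.
Proof.
case/mx_neq0_entry=> p _.
have [q _ max_q] := eq_bigmax (x := 0) p predT _ isT (fun q _ => normr_ge0 (A q.1 q.2)).
by exists q; rewrite /maxnorm max_q.
Qed.

Lemma normInf_mulmx_le A (x : 'cV[R]_n) : norm1 x <= 1 -> normInf (A *m x) <= maxnorm A.
Proof.
move=> x1; apply: bigmax_le; first exact: maxnorm_ge0.
move=> i _; rewrite mxE; apply: le_trans (ler_norm_sum _ _ _) _.
apply: le_trans (_ : \sum_j maxnorm A * `|x j 0| <= _).
  apply: ler_sum => j _; rewrite normrM ler_wpM2r //.
  exact: (ler_maxnorm A (i, j)).
by rewrite -mulr_sumr -[leRHS]mulr1 ler_wpM2l // maxnorm_ge0.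
Qed.

Lemma opnormE A : opnorm A = maxnorm A.
Proof.
have norm1_delta j : norm1 (delta_mx j 0 : 'cV[R]_n) <= 1.
  rewrite /norm1 (bigD1 j) //= big1 ?addr0 => [|k /negbTE kj].
    by rewrite mxE !eqxx normr1.
  by rewrite mxE kj normr0.
have norm1_0 : norm1 (0 : 'cV[R]_n) <= 1.
  by rewrite /norm1 big1 // => j _; rewrite mxE normr0.
have opnorm_ge x : norm1 x <= 1 -> normInf (A *m x) <= opnorm A.
  exact: le_sup_img (normInf_mulmx_le A).
apply/le_anti/andP; split.
  by apply: (sup_img_le (x0 := 0)) => // x; exact: normInf_mulmx_le.
apply: maxnorm_le => [|i j].
  by apply: le_trans (opnorm_ge _ norm1_0); exact: bigmax_ge_id.
apply: le_trans (opnorm_ge _ (norm1_delta j)); apply: le_trans (le_bigmax _ _ i).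
by rewrite mxE (bigD1 j) //= big1 ?addr0 => [|k /negbTE kj]; rewrite mxE ?eqxx ?mulr1 ?kj ?mulr0.
Qed.

End MaxEntryNorm.

Section DualNorm.
Variables (R : realType) (m n : nat).
Implicit Types (A : 'M[R]_(m, n)) (psi : 'M[R]_(m, n) -> R) (p q r : 'I_m * 'I_n).

Lemma delta_mx_pairE p r : (delta_mx p.1 p.2 : 'M[R]_(m, n)) r.1 r.2 = (r == p)%:R.
Proof. by case: p r => [i j] [k l]; rewrite mxE xpair_eqE. Qed.

Section LinearFunctional.
Variables (psi : 'M[R]_(m, n) -> R) (psi_lin : lin_functional psi).

Lemma lin_functional0 : psi 0 = 0.
Proof. by have /eqP := psi_lin 1 0 0; rewrite scaler0 addr0 mul1r -subr_eq subrr eq_sym => /eqP. Qed.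

Lemma lin_functionalD A B : psi (A + B) = psi A + psi B.
Proof. by have := psi_lin 1 A B; rewrite scale1r mul1r. Qed.

Lemma lin_functionalZ a A : psi (a *: A) = a * psi A.
Proof. by have := psi_lin a A 0; rewrite !addr0 lin_functional0 addr0. Qed.

Lemma lin_functionalE A : psi A = \sum_p A p.1 p.2 * psi (delta_mx p.1 p.2).
Proof.
rewrite {1}(matrix_sum_delta A) pair_bigA /=.
rewrite (big_morph psi lin_functionalD lin_functional0).
by apply: eq_bigr => p _; rewrite lin_functionalZ.
Qed.

Lemma lin_functional_supported p :
  (forall r, r != p -> psi (delta_mx r.1 r.2) = 0) ->
  forall A, psi A = A p.1 p.2 * psi (delta_mx p.1 p.2).
Proof.
move=> psi_p A; rewrite lin_functionalE (bigD1 p) //= big1 ?addr0 // => r rp.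
by rewrite psi_p ?mulr0.
Qed.

Lemma lin_functional_le A :
  opnorm A <= 1 -> `|psi A| <= \sum_p `|psi (delta_mx p.1 p.2)|.
Proof.
rewrite opnormE => A1; rewrite lin_functionalE; apply: le_trans (ler_norm_sum _ _ _) _.
apply: ler_sum => p _; rewrite normrM -[leRHS]mul1r ler_wpM2r //.
exact: le_trans (ler_maxnorm A p) A1.
Qed.

(* The sup defining the dual norm is attained at the sign pattern of psi. *)
Lemma dualnormE : dualnorm psi = \sum_p `|psi (delta_mx p.1 p.2)|.
Proof.
have opnorm0 : opnorm (0 : 'M[R]_(m, n)) <= 1.
  by rewrite opnormE; apply: maxnorm_le => // i j; rewrite mxE normr0.
apply/le_anti/andP; split.
  exact: (sup_img_le (x0 := 0)) lin_functional_le.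
pose S : 'M[R]_(m, n) := \matrix_(i, j) Num.sg (psi (delta_mx i j)).
have S1 : opnorm S <= 1.
  by rewrite opnormE; apply: maxnorm_le => // i j; rewrite mxE normr_sg; case: (_ != 0).
have -> : \sum_p `|psi (delta_mx p.1 p.2)| = `|psi S|.
  rewrite [psi S]lin_functionalE ger0_norm; last first.
    by apply: sumr_ge0 => p _; rewrite mxE -normrEsg.
  by apply: eq_bigr => p _; rewrite mxE -normrEsg.
exact: le_sup_img lin_functional_le S1.
Qed.

End LinearFunctional.

Definition entry_functional p (s : R) A : R := A p.1 p.2 * s.

Lemma entry_functional_lin p s : lin_functional (entry_functional p s).
Proof. by move=> a A B; rewrite /entry_functional !mxE mulrDl mulrA. Qed.

Lemma dualnorm_entry_functional p s : dualnorm (entry_functional p s) = `|s|.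
Proof.
rewrite dualnormE; last exact: entry_functional_lin.
rewrite (bigD1 p) //= big1 => [|r rp].
  by rewrite /entry_functional delta_mx_pairE eqxx mul1r addr0.
by rewrite /entry_functional delta_mx_pairE eq_sym (negbTE rp) mul0r normr0.
Qed.

Lemma dualnorm_sub_entry_functional p q s t : p != q ->
  dualnorm (fun A => entry_functional p s A - entry_functional q t A) = `|s| + `|t|.
Proof.
move=> pq; rewrite dualnormE; last first.
  move=> a A B; rewrite !(entry_functional_lin p s a A B) !(entry_functional_lin q t a A B).
  by rewrite mulrBr addrACA opprD.
rewrite (bigD1 p) // (bigD1 q) 1?eq_sym //= big1 ?addr0 => [|r /andP[rp rq]].
  rewrite /entry_functional !delta_mx_pairE !eqxx eq_sym (negbTE pq).
  by rewrite !mul1r !mul0r subr0 sub0r normrN.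
rewrite /entry_functional !delta_mx_pairE ![_ == r]eq_sym (negbTE rp) (negbTE rq).
by rewrite !mul0r subr0 normr0.
Qed.

End DualNorm.

Section NormingFunctionals.
Variables (R : realType) (m n : nat) (T : 'M[R]_(m, n)).
Implicit Types (psi : 'M[R]_(m, n) -> R) (p q r : 'I_m * 'I_n).

Hypothesis T_neq0 : T != 0.

Lemma max_entry_neq0 p : `|T p.1 p.2| = opnorm T -> T p.1 p.2 != 0.
Proof. by move=> Tp; rewrite -normr_gt0 Tp opnormE maxnorm_gt0. Qed.

Lemma Jset_entry_functional p :
  `|T p.1 p.2| = opnorm T -> Jset T (entry_functional p (Num.sg (T p.1 p.2))).
Proof.
move=> Tp; have Tp0 := max_entry_neq0 Tp.
split; first exact: entry_functional_lin.
by rewrite dualnorm_entry_functional normr_sg Tp0 /entry_functional mulrC -normrEsg.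
Qed.

(* [\sum_r (||T|| |c_r| - T_r c_r)] is a sum of nonnegative terms equal to
   [||T|| * ||psi|| - psi T = 0]. *)
Lemma Jset_supported psi q :
  Jset T psi -> `|T q.1 q.2| < opnorm T -> psi (delta_mx q.1 q.2) = 0.
Proof.
move=> [psi_lin [psi1 psiT]] Tq; set c := fun r => psi (delta_mx r.1 r.2).
have slack_ge0 r : 0 <= opnorm T * `|c r| - T r.1 r.2 * c r.
  rewrite subr_ge0 opnormE; apply: le_trans (ler_norm _) _.
  by rewrite normrM ler_wpM2r // ler_maxnorm.
have slack_sum : \sum_r (opnorm T * `|c r| - T r.1 r.2 * c r) = 0.
  by rewrite sumrB -mulr_sumr -dualnormE // psi1 mulr1 -lin_functionalE // psiT subrr.
have /eqP := psumr_eq0P (fun r _ => slack_ge0 r) slack_sum (i := q) isT.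
rewrite subr_eq0 => /eqP slack_q.
have gap : 0 < opnorm T - `|T q.1 q.2| by rewrite subr_gt0.
apply/eqP; rewrite -normr_le0 -(pmulr_rle0 _ gap).
by rewrite mulrBl slack_q subr_le0 -normrM ler_norm.
Qed.

Lemma Jset_unique_max_entry psi p :
  `|T p.1 p.2| = opnorm T -> (forall q, `|T q.1 q.2| = opnorm T -> q = p) ->
  Jset T psi -> psi = entry_functional p (Num.sg (T p.1 p.2)).
Proof.
move=> Tp max_p Jpsi; have [psi_lin [_ psiT]] := Jpsi.
have Tp0 := max_entry_neq0 Tp.
have psi_supp : forall r, r != p -> psi (delta_mx r.1 r.2) = 0.
  move=> r rp; apply: Jset_supported => //; rewrite lt_neqAle opnormE ler_maxnorm andbT.
  by apply: contra rp => /eqP Tr; apply/eqP/max_p; rewrite opnormE.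
have psi_p : psi (delta_mx p.1 p.2) = Num.sg (T p.1 p.2).
  apply: (mulfI Tp0); rewrite [RHS]mulrC -normrEsg Tp -psiT.
  by rewrite (lin_functional_supported psi_lin psi_supp T).
apply: funext => A; rewrite /entry_functional -psi_p.
exact: lin_functional_supported.
Qed.

Lemma approx_smooth_max_entry_unique p q : approx_smooth T ->
  `|T p.1 p.2| = opnorm T -> `|T q.1 q.2| = opnorm T -> p = q.
Proof.
move=> [eps [_ [eps_lt2 T_eps]]] Tp Tq; apply/eqP/negP => /negP pq.
have := T_eps _ _ (Jset_entry_functional Tp) (Jset_entry_functional Tq).
rewrite dualnorm_sub_entry_functional // !normr_sg !max_entry_neq0 // => two_le_eps.
by have := le_lt_trans two_le_eps eps_lt2; rewrite ltxx.
Qed.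

End NormingFunctionals.

Theorem theorem3p5 (R : realType) (m n : nat) (T : 'M[R]_(m, n)) :
  (2 <= m)%N -> T != 0 -> approx_smooth T -> smooth T.
Proof.
move=> _ T0 T_approx; have [p Tp] := maxnorm_attained T0.
rewrite -opnormE in Tp.
exists (entry_functional p (Num.sg (T p.1 p.2))).
split; first exact: Jset_entry_functional.
move=> psi; apply: Jset_unique_max_entry => // q Tq.
exact: (approx_smooth_max_entry_unique T0 T_approx Tq Tp).
Qed.
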